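(* Consider the volume-pricing market described in the context. Then: (i) $R(p)$ is unimodal on $[\eta,\infty)$ (i.e., there is $\hat p>\eta$ with $R'(p)>0$ for $\eta\le p<\hat p$, $R'(\hat p)=0$ and $R'(p)<0$ for $p>\hat p$), and the feasible price set $\mathcal P$ is non-empty and connected. (ii) If $R'(p_0)<0$, then the network is opt-saturated and the unique equilibrium price is $p^\star=p_0=p_0(\kappa_{\mathrm{peak}})$, the threshold price, which satisfies $A(p_0)=C_{3g}$ and, viewing $\kappa_{\mathrm{peak}}$ as a variable, $\frac{\partial p_0(\kappa_{\mathrm{peak}})}{\partial\kappa_{\mathrm{peak}}}>0$. (iii) If $R'(p_0)>0$, then the network is opt-unsaturated and the unique equilibrium price $p^\star=p^\star(\kappa_{\mathrm{avg}})$ is the solution of $R'(p)=0$; moreover, viewing $\kappa_{\mathrm{avg}}$ as a variable, $\frac{\partial\big(p^\star(\kappa_{\mathrm{avg}})\,\kappa_{\mathrm{avg}}\big)}{\partial\kappa_{\mathrm{avg}}}>0$.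
   Context: Market model (single cell). There are $\hat N$ users (treated as a continuum of mass $\hat N$) in one base-station cell with capacity $C_{3g}>0$ (traffic volume per time slot), and time slots $t\in T=\{1,\dots,|T|\}$. Each user's daily traffic demand $\Phi$ is random with density $f_\Phi(x)=x^{-\sigma}/Z$ for $0\le x\le\Phi_{\max}$, where $0<\sigma<1$ and $Z=\Phi_{\max}^{1-\sigma}/(1-\sigma)$. All users share a temporal preference $w(t)> 0$ with $\sum_{t\in T}w(t)=1$; a user with demand $\Phi$ has per-slot demand $\phi(t)=w(t)\Phi$. The willingness to pay is $\gamma(t)=w(t)^{1-\theta}$ with price sensitivity $\theta\in(0,1)$. Offloading indicators: constants $\kappa_{\mathrm{avg}},\kappa_{\mathrm{peak}}\in(0,1]$ (independent of price). Delay profile and WiFi contact probabilities are homogeneous across users and time, so that every user's daily cellular (3G) traffic equals $\kappa_{\mathrm{avg}}$ times its total (3G+WiFi) traffic; and if $X_{\rm tot}(p)$ is the total traffic sent in the cell in a day at price $p$, the peak per-slot cellular traffic is $A(p)=\kappa_{\mathrm{peak}}X_{\rm tot}(p)$. Volume pricing with unit price $p>0$ per unit of cellular traffic: a user with demand $\Phi$ chooses $x(t)\in[0,\phi(t)]$ to maximize $\sum_{t}w(t)^{1-\theta}x(t)^\theta-p\,\kappa_{\mathrm{avg}}\sum_t x(t)$; its optimal choice is $x^\star_\Phi(t)=w(t)\min\{\Phi,(\theta/(p\kappa_{\mathrm{avg}}))^{1/(1-\theta)}\}$ (every user participates). Then $X_{\rm tot}(p)=\hat N\int_0^{\Phi_{\max}}\sum_t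 x^\star_\Phi(t)f_\Phi(\Phi)\,d\Phi$, and the provider's revenue with linear cellular cost coefficient $\eta>0$ is $R(p)=(p-\eta)\,\kappa_{\mathrm{avg}}X_{\rm tot}(p)$. Feasible price set: $\mathcal P=\{p: R(p)>0,\ A(p)\le C_{3g}\}$; threshold price $p_0=\inf\mathcal P$. An equilibrium price is any $p^\star\in\arg\max_{p\in\mathcal P}R(p)$. The network is saturated at $p$ if $A(p)=C_{3g}$; for a unique equilibrium price $p^\star$, the network is called opt-saturated if it is saturated at $p^\star$ and opt-unsaturated otherwise. *)

From Stdlib Require Import Reals Lra ClassicalEpsilon.
Open Scope R_scope.

(* Finite sum over time slots t = 0, ..., n-1 (the slots T = {1,...,|T|}
   are re-indexed from 0; |T| = n). *)
Fixpoint sumT (n : nat) (f : nat -> R) : R :=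
  match n with
  | O => 0
  | S m => sumT m f + f m
  end.

(* Riemann integral of f over [a,b] (a <= b): the value of RiemannInt for
   any integrability proof (junk value 0 is irrelevant if f is integrable,
   which is the case for the integrand used below). *)
Definition RInt (f : R -> R) (a b : R) : R :=
  epsilon (inhabits 0)
    (fun v => exists pr : Riemann_integrable f a b, RiemannInt pr = v).

Definition Zconst (sigma Phimax : R) : R :=
  Rpower Phimax (1 - sigma) / (1 - sigma).

Definition fdens (sigma Phimax x : R) : R :=
  Rpower x (- sigma) / Zconst sigma Phimax.

(* Optimal per-slot traffic of a user with daily demand Phi at price p:
   x*_Phi(t) = w(t) min{Phi, (theta/(p kavg))^(1/(1-theta))}. *)
Definition xstar (w : nat -> R) (theta kavg p Phi : R) (t : nat) : R :=
  w t * Rmin Phi (Rpower (theta / (p * kavg)) (1 / (1 - theta))).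

(* Total (3G + WiFi) traffic in the cell in a day at price p:
   X_tot(p) = Nhat * int_0^Phimax sum_t x*_Phi(t) f_Phi(Phi) dPhi. *)
Definition Xtot (n : nat) (w : nat -> R) (Nhat sigma Phimax theta kavg p : R) : R :=
  Nhat * RInt (fun Phi => sumT n (xstar w theta kavg p Phi) * fdens sigma Phimax Phi)
              0 Phimax.

Definition Rev (n : nat) (w : nat -> R) (Nhat sigma Phimax theta kavg eta p : R) : R :=
  (p - eta) * kavg * Xtot n w Nhat sigma Phimax theta kavg p.

Definition Apeak (n : nat) (w : nat -> R) (Nhat sigma Phimax theta kavg kpeak p : R) : R :=
  kpeak * Xtot n w Nhat sigma Phimax theta kavg p.

Definition Pset (n : nat) (w : nat -> R)
  (Nhat sigma Phimax theta kavg kpeak eta C : R) (p : R) : Prop :=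
  0 < Rev n w Nhat sigma Phimax theta kavg eta p /\
  Apeak n w Nhat sigma Phimax theta kavg kpeak p <= C.

Definition is_equilibrium (n : nat) (w : nat -> R)
  (Nhat sigma Phimax theta kavg kpeak eta C : R) (p : R) : Prop :=
  Pset n w Nhat sigma Phimax theta kavg kpeak eta C p /\
  forall p', Pset n w Nhat sigma Phimax theta kavg kpeak eta C p' ->
    Rev n w Nhat sigma Phimax theta kavg eta p' <=
    Rev n w Nhat sigma Phimax theta kavg eta p.

Definition is_glb (S : R -> Prop) (m : R) : Prop :=
  (forall x, S x -> m <= x) /\
  (forall m', (forall x, S x -> m' <= x) -> m' <= m).

Definition interval_set (S : R -> Prop) : Prop :=
  forall a b c, S a -> S c -> a <= b -> b <= c -> S b.

(* Every user chooses a per-slot demand capped at a level depending only on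
   the effective price y = p kavg, so the daily traffic is
   X_tot(p) = Nhat * E[min(Phi, Q(p kavg))] with Q(y) = (theta/y)^(1/(1-theta)).
   For the power-law demand this expectation has the closed form
   q (1 - F(q)/(2-sigma)) below Phimax (F the demand c.d.f.) and is constant
   above, so X_tot, R and A are explicit differentiable functions of p.
   Factoring R'(p) shows that, where Q(p kavg) < Phimax, its sign is that of
   eta kavg - K(p kavg) for an explicit strictly increasing map K on a
   half-line; hence R'(p) > 0 before a unique critical price and R'(p) < 0
   after it (unimodality, part (i)), and P = {p > eta, A(p) <= C} is an
   interval because A is non-increasing.  Parts (ii) and (iii) locate the
   maximiser of R on P at the threshold price p0 or at the critical price,
   and their comparative statics follow from an implicit-function lemma for
   strictly monotone functions, applied to A(p0(kpeak)) = C and to the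
   first-order condition K(p* kavg) = eta kavg respectively. *)

From Pilot Require Import Defs.
From Stdlib Require Import Reals Lra ClassicalEpsilon.
From Coquelicot Require Import Coquelicot.
Open Scope R_scope.

Lemma derivable_pt_lim_continuous (f : R -> R) (x l : R) :
  derivable_pt_lim f x l -> continuity_pt f x.
Proof. intro H. apply derivable_continuous_pt. exists l. exact H. Qed.

Lemma derivable_pt_lim_eps_delta (f : R -> R) (x l : R) :
  derivable_pt_lim f x l -> forall eps, 0 < eps ->
  exists del, 0 < del /\ forall y, Rabs (y - x) < del -> Rabs (f y - f x) < eps.
Proof.
  intros H eps Heps.
  destruct (derivable_pt_lim_continuous f x l H eps Heps) as [a [Ha Ha']].
  exists a. split; [exact Ha|]. intros y Hy. destruct (Req_dec y x) as [->|Hne].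
  - rewrite Rminus_diag, Rabs_R0. exact Heps.
  - apply (Ha' y). split; [split; [exact I|congruence]|exact Hy].
Qed.

Lemma derivable_pt_lim_ball (f g : R -> R) (x r l : R) : 0 < r ->
  (forall z, Rabs (z - x) < r -> f z = g z) ->
  derivable_pt_lim f x l -> derivable_pt_lim g x l.
Proof.
  intros Hr Heq. apply derivable_pt_lim_locally_ext with (x - r) (x + r); [lra|].
  intros z Hz. apply Heq. apply Rabs_def1; lra.
Qed.

(** It is continuous for a > 0 and lets us integrate x^(1-sigma) from 0 by
    the fundamental theorem of calculus. *)

Definition pos_power (a x : R) : R := if Rlt_dec 0 x then Rpower x a else 0.

Lemma Rpower_pos (x a : R) : 0 < Rpower x a.
Proof. apply exp_pos. Qed.

Lemma Rpower_small (a e : R) : 0 < a -> 0 < e ->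
  exists d, 0 < d /\ forall h, 0 < h < d -> Rpower h a < e.
Proof.
  intros Ha He. exists (Rpower e (/ a)). split; [apply Rpower_pos|].
  intros h Hh. apply Rlt_le_trans with (Rpower (Rpower e (/ a)) a).
  - apply Rlt_Rpower_l; lra.
  - rewrite Rpower_mult, Rinv_l, Rpower_1 by lra. lra.
Qed.

Lemma pos_power_derivable_pos (a x : R) : 0 < x ->
  derivable_pt_lim (pos_power a) x (a * Rpower x (a - 1)).
Proof.
  intros Hx. apply derivable_pt_lim_ball with (fun z => Rpower z a) x; [exact Hx| |].
  - intros z Hz. unfold pos_power. apply Rabs_def2 in Hz.
    destruct (Rlt_dec 0 z); [reflexivity|lra].
  - apply derivable_pt_lim_power. exact Hx.
Qed.

Lemma pos_power_derivable (a x : R) : 0 < a -> 0 <= x ->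
  derivable_pt_lim (pos_power (a + 1)) x ((a + 1) * pos_power a x).
Proof.
  intros Ha [Hx|<-].
  - unfold pos_power at 2. destruct (Rlt_dec 0 x); [|lra].
    pose proof (pos_power_derivable_pos (a + 1) x Hx) as H.
    replace (a + 1 - 1) with a in H by ring. exact H.
  - unfold pos_power at 2. destruct (Rlt_dec 0 0); [lra|]. rewrite Rmult_0_r.
    intros eps Heps. destruct (Rpower_small a eps Ha Heps) as [d [Hd Hsmall]].
    exists (mkposreal d Hd). intros h Hh0 Hh. simpl in Hh.
    unfold pos_power. rewrite Rplus_0_l. destruct (Rlt_dec 0 0); [lra|].
    destruct (Rlt_dec 0 h).
    + rewrite Rpower_plus, Rpower_1 by assumption.
      replace ((Rpower h a * h - 0) / h - 0) with (Rpower h a) by (field; lra).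
      rewrite Rabs_pos_eq by (left; apply Rpower_pos). apply Hsmall.
      rewrite Rabs_pos_eq in Hh; lra.
    + replace ((0 - 0) / h - 0) with 0 by (field; lra). rewrite Rabs_R0. exact Heps.
Qed.

Lemma pos_power_continuous (a x : R) : 0 < a -> continuity_pt (pos_power a) x.
Proof.
  intros Ha. destruct (Rtotal_order 0 x) as [Hx|[<-|Hx]].
  - eapply derivable_pt_lim_continuous. apply pos_power_derivable_pos. exact Hx.
  - intros eps Heps. destruct (Rpower_small a eps Ha Heps) as [d [Hd Hsmall]].
    exists d. split; [exact Hd|]. intros x [_ Hx]. simpl in *. unfold R_dist in *.
    unfold pos_power. destruct (Rlt_dec 0 0); [lra|]. rewrite Rminus_0_r.
    destruct (Rlt_dec 0 x).
    + rewrite Rabs_pos_eq by (left; apply Rpower_pos). apply Hsmall.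
      rewrite Rminus_0_r, Rabs_pos_eq in Hx; lra.
    + rewrite Rabs_R0. exact Heps.
  - apply derivable_pt_lim_continuous with 0.
    apply derivable_pt_lim_ball with (fun _ => 0) (- x); [lra| |apply derivable_pt_lim_const].
    intros z Hz. unfold pos_power. apply Rabs_def2 in Hz. destruct (Rlt_dec 0 z); [lra|reflexivity].
Qed.

Lemma RInt_of_is_RInt (f : R -> R) (a b v : R) : is_RInt f a b v -> Defs.RInt f a b = v.
Proof.
  intro H. assert (pr : Riemann_integrable f a b).
  { apply ex_RInt_Reals_0. exists v. exact H. }
  unfold Defs.RInt.
  destruct (epsilon_spec (inhabits 0)
     (fun v => exists pr : Riemann_integrable f a b, RiemannInt pr = v)
     (ex_intro _ _ (ex_intro _ pr eq_refl))) as [pr' <-].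
  rewrite <- RInt_Reals. apply is_RInt_unique. exact H.
Qed.

Lemma sumT_scal_r (f : nat -> R) (m : nat) (c : R) :
  sumT m (fun t => f t * c) = c * sumT m f.
Proof. induction m as [|m IH]; simpl; [ring|]. rewrite IH. ring. Qed.

Lemma inverse_injective (a b x y : R) : a <> 0 -> b <> 0 -> x <> 0 -> y <> 0 ->
  a / (b * x) = a / (b * y) -> x = y.
Proof.
  intros Ha Hb Hx Hy H. apply Rmult_eq_reg_l with b; [|exact Hb].
  rewrite <- (Rinv_inv (b * x)), <- (Rinv_inv (b * y)). f_equal.
  apply Rmult_eq_reg_l with a; [exact H|exact Ha].
Qed.

Lemma glb_approx (S : R -> Prop) (m : R) : is_glb S m ->
  forall e, 0 < e -> exists x, S x /\ x < m + e.
Proof.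
  intros [_ Hgreatest] e He. apply NNPP. intro Hnone.
  assert (m + e <= m); [|lra].
  apply Hgreatest. intros x Hx. apply Rnot_lt_le. intro. apply Hnone. exists x. auto.
Qed.

Lemma glb_ge (S : R -> Prop) (m a : R) : is_glb S m -> (forall x, S x -> a < x) -> a <= m.
Proof. intros [_ Hgreatest] H. apply Hgreatest. intros x Hx. left. auto. Qed.

Lemma glb_unique (S : R -> Prop) (m1 m2 : R) : is_glb S m1 -> is_glb S m2 -> m1 = m2.
Proof. intros [H1 H2] [H3 H4]. apply Rle_antisym; auto. Qed.

Lemma glb_exists (S : R -> Prop) (a : R) :
  (exists x, S x) -> (forall x, S x -> a <= x) -> exists m, is_glb S m.
Proof.
  intros [x0 Hx0] Ha.
  destruct (completeness (fun y => S (- y))) as [m [Hub Hlub]].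
  - exists (- a). intros y Hy. apply Ha in Hy. lra.
  - exists (- x0). rewrite Ropp_involutive. exact Hx0.
  - exists (- m). split.
    + intros x Hx. assert (- x <= m) by (apply Hub; rewrite Ropp_involutive; exact Hx). lra.
    + intros m' Hm'. assert (m <= - m'); [|lra].
      apply Hlub. intros y Hy. apply Hm' in Hy. lra.
Qed.

Lemma quotient_estimate (U q e d eps : R) : 0 < d -> 0 < eps ->
  Rabs (U - e) < eps * d / 4 ->
  Rabs (q - d) < Rmin (d / 2) (eps * d * d / (4 * (Rabs e + 1))) ->
  Rabs (U / q - e / d) < eps.
Proof.
  intros Hd He HU Hq.
  assert (Hq1 : Rabs (q - d) < d / 2) by (eapply Rlt_le_trans; [exact Hq|apply Rmin_l]).
  assert (Hq2 : Rabs (q - d) < eps * d * d / (4 * (Rabs e + 1)))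
    by (eapply Rlt_le_trans; [exact Hq|apply Rmin_r]).
  assert (Hqp : d / 2 < q) by (apply Rabs_def2 in Hq1; lra).
  assert (HE : 0 <= Rabs e) by apply Rabs_pos.
  assert (Hq3 : Rabs e * Rabs (q - d) <= eps * d * d / 4).
  { assert (Rabs (q - d) * (4 * (Rabs e + 1)) < eps * d * d).
    { apply Rmult_lt_reg_r with (/ (4 * (Rabs e + 1))); [apply Rinv_0_lt_compat; lra|].
      rewrite Rmult_assoc, Rinv_r by lra. lra. }
    assert (0 <= Rabs (q - d)) by apply Rabs_pos. nra. }
  set (X := U / q - e / d).
  assert (HX : X * (q * d) = (U - e) * d + e * (d - q)) by (unfold X; field; lra).
  assert (HXa : Rabs X * (q * d) <= Rabs (U - e) * d + Rabs e * Rabs (q - d)).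
  { rewrite <- (Rabs_pos_eq (q * d)) by nra. rewrite <- Rabs_mult, HX.
    eapply Rle_trans; [apply Rabs_triang|]. rewrite !Rabs_mult, (Rabs_pos_eq d) by lra.
    rewrite <- Rabs_Ropp with (x := d - q). replace (- (d - q)) with (q - d) by ring. lra. }
  assert (0 <= Rabs (U - e)) by apply Rabs_pos.
  assert (Rabs (U - e) * d < eps * d / 4 * d) by (apply Rmult_lt_compat_r; lra).
  destruct (Rlt_or_le (Rabs X) eps) as [Hlt|Hge]; [exact Hlt|].
  assert (eps * (q * d) <= Rabs X * (q * d)) by (apply Rmult_le_compat_r; nra).
  nra.
Qed.

(* Continuity of g is not assumed:
   it follows from the monotonicity of f. *)
Section Implicit.
Variables (f g h : R -> R) (D : R -> Prop) (x0 k0 d e r r2 : R).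
Hypothesis f_incr : forall x y, D x -> D y -> x < y -> f x < f y.
Hypothesis r_pos : 0 < r.
Hypothesis D_ball : forall x, Rabs (x - x0) < r -> D x.
Hypothesis f_deriv : derivable_pt_lim f x0 d.
Hypothesis d_pos : 0 < d.
Hypothesis h_deriv : derivable_pt_lim h k0 e.
Hypothesis g_k0 : g k0 = x0.
Hypothesis r2_pos : 0 < r2.
Hypothesis g_solves : forall k, Rabs (k - k0) < r2 ->
  D (g k) /\ f (g k) = h k /\ (k <> k0 -> h k <> h k0).

(* Monotonicity of f forces g to be continuous at k0. *)
Lemma implicit_continuous : forall eps, 0 < eps ->
  exists del, 0 < del /\ forall k, Rabs (k - k0) < del -> Rabs (g k - x0) < eps.
Proof.
  intros eps Heps. set (ep := Rmin eps r / 2).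
  assert (Hmin : 0 < Rmin eps r) by (apply Rmin_pos; lra).
  assert (Hep : 0 < ep /\ ep < eps /\ ep < r)
    by (unfold ep; pose proof (Rmin_l eps r); pose proof (Rmin_r eps r); lra).
  assert (Hball : forall y, Rabs y < r -> D (x0 + y))
    by (intros y Hy; apply D_ball; replace (x0 + y - x0) with y by ring; exact Hy).
  assert (HDm : D (x0 + - ep)) by (apply Hball; rewrite Rabs_Ropp, Rabs_pos_eq; lra).
  assert (HDp : D (x0 + ep)) by (apply Hball; rewrite Rabs_pos_eq; lra).
  assert (HD0 : D (x0 + 0)) by (apply Hball; rewrite Rabs_R0; lra).
  rewrite Rplus_0_r in HD0.
  assert (Hlo : f (x0 + - ep) < f x0) by (apply f_incr; auto; lra).
  assert (Hhi : f x0 < f (x0 + ep)) by (apply f_incr; auto; lra).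
  assert (Hf0 : f x0 = h k0).
  { destruct (g_solves k0) as [_ [Hf _]]; [rewrite Rminus_diag, Rabs_R0; lra|].
    rewrite <- g_k0. exact Hf. }
  set (gap := Rmin (f x0 - f (x0 + - ep)) (f (x0 + ep) - f x0)).
  assert (Hgap : 0 < gap /\ gap <= f x0 - f (x0 + - ep) /\ gap <= f (x0 + ep) - f x0)
    by (unfold gap; split; [apply Rmin_pos; lra|split; [apply Rmin_l|apply Rmin_r]]).
  destruct (derivable_pt_lim_eps_delta h k0 e h_deriv gap (proj1 Hgap)) as [d3 [Hd3 Hclose]].
  exists (Rmin d3 r2). split; [apply Rmin_pos; lra|].
  intros k Hk. pose proof (Rmin_l d3 r2). pose proof (Rmin_r d3 r2).
  destruct (g_solves k ltac:(lra)) as [HDg [Hfg _]].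
  pose proof (Hclose k ltac:(lra)) as Hhk. rewrite <- Hf0 in Hhk. apply Rabs_def2 in Hhk.
  apply Rabs_def1.
  - destruct (Rlt_or_le (g k - x0) eps) as [Hl|Hl]; [exact Hl|exfalso].
    destruct (Req_dec (g k) (x0 + ep)) as [E|E]; [rewrite E in Hfg; lra|].
    assert (f (x0 + ep) < f (g k)) by (apply f_incr; auto; lra). lra.
  - destruct (Rlt_or_le (- eps) (g k - x0)) as [Hl|Hl]; [exact Hl|exfalso].
    destruct (Req_dec (g k) (x0 + - ep)) as [E|E]; [rewrite E in Hfg; lra|].
    assert (f (g k) < f (x0 + - ep)) by (apply f_incr; auto; lra). lra.
Qed.

(* The difference quotient of g is the quotient of those of h and f. *)
Lemma implicit_derivative : derivable_pt_lim g k0 (e / d).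
Proof.
  intros eps Heps.
  set (eps1 := Rmin (d / 2) (eps * d * d / (4 * (Rabs e + 1)))).
  assert (He1 : 0 < eps1).
  { unfold eps1. pose proof (Rabs_pos e). apply Rmin_pos; [lra|].
    apply Rdiv_lt_0_compat; [apply Rmult_lt_0_compat; [apply Rmult_lt_0_compat|]|]; lra. }
  destruct (f_deriv eps1 He1) as [d1 Hd1].
  assert (He2 : 0 < eps * d / 4) by (apply Rdiv_lt_0_compat; [apply Rmult_lt_0_compat|]; lra).
  destruct (h_deriv _ He2) as [d2 Hd2].
  destruct (implicit_continuous d1 (cond_pos d1)) as [dc [Hdc Hgclose]].
  assert (Hdel : 0 < Rmin dc (Rmin d2 r2))
    by (apply Rmin_pos; [lra|apply Rmin_pos; [apply cond_pos|lra]]).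
  exists (mkposreal _ Hdel). intros z Hz0 Hz. simpl in Hz.
  pose proof (Rmin_l dc (Rmin d2 r2)). pose proof (Rmin_r dc (Rmin d2 r2)).
  pose proof (Rmin_l d2 r2). pose proof (Rmin_r d2 r2).
  set (k := k0 + z). assert (Hkz : k - k0 = z) by (unfold k; ring).
  destruct (g_solves k ltac:(rewrite Hkz; lra)) as [_ [Hfg Hne]].
  destruct (g_solves k0 ltac:(rewrite Rminus_diag, Rabs_R0; lra)) as [_ [Hf0 _]].
  rewrite g_k0 in Hf0.
  assert (Hu : h k - h k0 <> 0) by (apply Rminus_eq_contra, Hne; unfold k; lra).
  set (t := g k - x0).
  assert (Ht : t <> 0) by (intro E; apply Hu; unfold t in E; replace (g k) with x0 in Hfg by lra; lra).
  assert (Hq := Hd1 t Ht ltac:(unfold t; apply Hgclose; rewrite Hkz; lra)).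
  replace (x0 + t) with (g k) in Hq by (unfold t; ring). rewrite Hfg, Hf0 in Hq.
  assert (HU := Hd2 z Hz0 ltac:(lra)). fold k in HU.
  rewrite g_k0. fold k t.
  replace (t / z) with (((h k - h k0) / z) / ((h k - h k0) / t)) by (field; auto).
  apply quotient_estimate; assumption.
Qed.

End Implicit.

(** * The market model *)

(* Parameters of Proposition 2; the price sensitivity kavg and the peak
   factor kpeak vary in parts (ii) and (iii) and are not fixed here. *)
Section Market.
Variables (n : nat) (w : nat -> R) (Nhat sigma Phimax theta eta : R).
Hypothesis Hwsum : sumT n w = 1.
Hypothesis HNhat : 0 < Nhat.
Hypothesis Hsigma : 0 < sigma < 1.
Hypothesis HPhimax : 0 < Phimax.
Hypothesis Htheta : 0 < theta < 1.
Hypothesis Heta : 0 < eta.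

(* The c.d.f. F(q) = P(Phi <= q) of the demand, for 0 < q <= Phimax. *)
Definition demand_cdf (q : R) : R := Rpower q (1 - sigma) / Rpower Phimax (1 - sigma).

(* E[min(Phi, q)] for 0 < q <= Phimax ... *)
Definition capped_below (q : R) : R := q * (1 - demand_cdf q / (2 - sigma)).

(* ... and for q >= Phimax, the mean demand E[Phi]. *)
Definition mean_demand : R := Phimax * (1 - sigma) / (2 - sigma).

Definition mean_capped (q : R) : R :=
  if Rle_dec q Phimax then capped_below q else mean_demand.

(* Its derivative P(Phi > q), which is 1 - F(q) below Phimax and 0 above. *)
Definition survival (q : R) : R := if Rle_dec q Phimax then 1 - demand_cdf q else 0.

Lemma Zconst_pos : 0 < Zconst sigma Phimax.
Proof. apply Rdiv_lt_0_compat; [apply Rpower_pos|lra]. Qed.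

(* F(Phimax) = 1, so the closed forms below and above Phimax agree. *)
Lemma demand_cdf_Phimax : demand_cdf Phimax = 1.
Proof. unfold demand_cdf. pose proof (Rpower_pos Phimax (1 - sigma)). field. lra. Qed.

Lemma capped_below_Phimax : capped_below Phimax = mean_demand.
Proof. unfold capped_below, mean_demand. rewrite demand_cdf_Phimax. field. lra. Qed.

Lemma integral_low (b : R) : 0 < b ->
  is_RInt (fun x => pos_power (1 - sigma) x / Zconst sigma Phimax) 0 b
          (Rpower b (2 - sigma) / ((2 - sigma) * Zconst sigma Phimax)).
Proof.
  intros Hb. pose proof Zconst_pos as HZ.
  set (F := fun x => / ((2 - sigma) * Zconst sigma Phimax) * pos_power (1 - sigma + 1) x).
  assert (H : is_RInt (fun x => / ((2 - sigma) * Zconst sigma Phimax) *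
                         ((1 - sigma + 1) * pos_power (1 - sigma) x)) 0 b (minus (F b) (F 0))).
  { apply (is_RInt_derive F).
    - intros x Hx. rewrite Rmin_left, Rmax_right in Hx by lra.
      apply is_derive_Reals, derivable_pt_lim_scal, pos_power_derivable; lra.
    - intros x _. apply continuity_pt_filterlim.
      apply continuity_pt_scal, continuity_pt_scal, pos_power_continuous. lra. }
  replace (Rpower b (2 - sigma) / ((2 - sigma) * Zconst sigma Phimax)) with (minus (F b) (F 0)).
  - eapply is_RInt_ext; [|exact H]. intros x _. simpl. field. lra.
  - unfold minus, plus, opp, F, pos_power; simpl. destruct (Rlt_dec 0 b); [|lra].
    destruct (Rlt_dec 0 0); [lra|]. replace (1 - sigma + 1) with (2 - sigma) by ring.
    field. lra.
Qed.

Lemma integral_high (q : R) : 0 < q -> q < Phimax ->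
  is_RInt (fun x => q * Rpower x (- sigma) / Zconst sigma Phimax) q Phimax
     (q * (Rpower Phimax (1 - sigma) - Rpower q (1 - sigma)) / ((1 - sigma) * Zconst sigma Phimax)).
Proof.
  intros Hq HqM. pose proof Zconst_pos as HZ.
  set (F := fun x => q / ((1 - sigma) * Zconst sigma Phimax) * Rpower x (1 - sigma)).
  assert (H : is_RInt (fun x => q / ((1 - sigma) * Zconst sigma Phimax) *
                         ((1 - sigma) * Rpower x (1 - sigma - 1))) q Phimax (minus (F Phimax) (F q))).
  { apply (is_RInt_derive F).
    - intros x Hx. rewrite Rmin_left, Rmax_right in Hx by lra.
      apply is_derive_Reals, derivable_pt_lim_scal, derivable_pt_lim_power. lra.
    - intros x Hx. rewrite Rmin_left, Rmax_right in Hx by lra.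
      apply continuity_pt_filterlim, continuity_pt_scal, continuity_pt_scal.
      eapply derivable_pt_lim_continuous. apply derivable_pt_lim_power. lra. }
  replace (q * (Rpower Phimax (1 - sigma) - Rpower q (1 - sigma)) / ((1 - sigma) * Zconst sigma Phimax))
    with (minus (F Phimax) (F q)).
  - eapply is_RInt_ext; [|exact H]. intros x _. simpl.
    replace (1 - sigma - 1) with (- sigma) by ring. field. lra.
  - unfold minus, plus, opp, F; simpl. field. lra.
Qed.

Lemma mean_capped_integral (q : R) : 0 < q ->
  is_RInt (fun x => Rmin x q * fdens sigma Phimax x) 0 Phimax (mean_capped q).
Proof.
  intros Hq. pose proof Zconst_pos as HZ. pose proof (Rpower_pos Phimax (1 - sigma)).
  assert (Hpw : forall x, 0 < x -> x * Rpower x (- sigma) = pos_power (1 - sigma) x).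
  { intros x Hx. unfold pos_power. destruct (Rlt_dec 0 x); [|lra].
    replace (1 - sigma) with (1 + - sigma) by ring. rewrite Rpower_plus, Rpower_1; auto. }
  assert (Hlow : forall b, 0 < b -> b <= q ->
    is_RInt (fun x => Rmin x q * fdens sigma Phimax x) 0 b
            (Rpower b (2 - sigma) / ((2 - sigma) * Zconst sigma Phimax))).
  { intros b Hb Hbq. eapply is_RInt_ext; [|apply integral_low; exact Hb].
    rewrite Rmin_left, Rmax_right by lra. intros x Hx. unfold fdens.
    rewrite Rmin_left by lra. rewrite <- Hpw by lra. simpl. field. lra. }
  unfold mean_capped. destruct (Rle_dec q Phimax) as [Hle|Hgt].
  - destruct (Req_dec q Phimax) as [->|Hne].
    + rewrite capped_below_Phimax. unfold mean_demand.
      replace (Phimax * (1 - sigma) / (2 - sigma))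
        with (Rpower Phimax (2 - sigma) / ((2 - sigma) * Zconst sigma Phimax)).
      * apply Hlow; lra.
      * unfold Zconst. replace (2 - sigma) with (1 + (1 - sigma)) by ring.
        rewrite Rpower_plus, Rpower_1 by lra. field. lra.
    + replace (capped_below q) with
        (plus (Rpower q (2 - sigma) / ((2 - sigma) * Zconst sigma Phimax))
              (q * (Rpower Phimax (1 - sigma) - Rpower q (1 - sigma)) / ((1 - sigma) * Zconst sigma Phimax))).
      * apply (is_RInt_Chasles (V := R_NormedModule)) with q; [apply Hlow; lra|].
        eapply is_RInt_ext; [|apply integral_high; lra].
        rewrite Rmin_left, Rmax_right by lra. intros x Hx. unfold fdens.
        rewrite Rmin_right by lra. simpl. field. lra.
      * unfold plus; simpl. unfold capped_below, demand_cdf, Zconst.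
        replace (2 - sigma) with (1 + (1 - sigma)) by ring.
        rewrite Rpower_plus, Rpower_1 by lra. field. lra.
  - unfold mean_demand.
    replace (Phimax * (1 - sigma) / (2 - sigma))
      with (Rpower Phimax (2 - sigma) / ((2 - sigma) * Zconst sigma Phimax)).
    + apply Hlow; lra.
    + unfold Zconst. replace (2 - sigma) with (1 + (1 - sigma)) by ring.
      rewrite Rpower_plus, Rpower_1 by lra. field. lra.
Qed.

Lemma demand_cdf_pos (q : R) : 0 < demand_cdf q.
Proof. apply Rdiv_lt_0_compat; apply Rpower_pos. Qed.

Lemma demand_cdf_lt (q1 q2 : R) : 0 < q1 < q2 -> demand_cdf q1 < demand_cdf q2.
Proof.
  intros H. unfold demand_cdf. apply Rmult_lt_compat_r.
  - apply Rinv_0_lt_compat, Rpower_pos.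
  - apply Rlt_Rpower_l; lra.
Qed.

Lemma demand_cdf_lt1 (q : R) : 0 < q < Phimax -> demand_cdf q < 1.
Proof. intros H. rewrite <- demand_cdf_Phimax. apply demand_cdf_lt. lra. Qed.

Lemma demand_cdf_ge1 (q : R) : Phimax <= q -> 1 <= demand_cdf q.
Proof.
  intros [H| <-]; [|rewrite demand_cdf_Phimax; lra].
  rewrite <- demand_cdf_Phimax. left. apply demand_cdf_lt. lra.
Qed.

Lemma capped_below_deriv (q : R) : 0 < q ->
  derivable_pt_lim capped_below q (1 - demand_cdf q).
Proof.
  intros Hq. pose proof (Rpower_pos Phimax (1 - sigma)). apply is_derive_Reals.
  unfold capped_below, demand_cdf. unfold Rpower at 1 3. auto_derive.
  - exact Hq.
  - field. repeat split; lra.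
Qed.

Lemma mean_capped_deriv (q : R) : 0 < q -> derivable_pt_lim mean_capped q (survival q).
Proof.
  intros Hq. destruct (Rtotal_order q Phimax) as [H|[->|H]].
  - apply derivable_pt_lim_ball with capped_below (Phimax - q); [lra| |].
    + intros z Hz. apply Rabs_def2 in Hz. unfold mean_capped.
      destruct (Rle_dec z Phimax); [reflexivity|lra].
    + unfold survival. destruct (Rle_dec q Phimax); [|lra]. apply capped_below_deriv. exact Hq.
  - (* at the kink both one-sided derivatives vanish *)
    unfold survival. destruct (Rle_dec Phimax Phimax); [|lra].
    rewrite demand_cdf_Phimax, Rminus_diag. apply is_derive_Reals.
    apply (extension_cont_is_derive capped_below (fun _ => mean_demand)).
    + apply is_derive_Reals.
      replace 0 with (1 - demand_cdf Phimax) by (rewrite demand_cdf_Phimax; ring).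
      apply capped_below_deriv. exact Hq.
    + apply is_derive_Reals, derivable_pt_lim_const.
    + exact capped_below_Phimax.
  - apply derivable_pt_lim_ball with (fun _ => mean_demand) (q - Phimax); [lra| |].
    + intros z Hz. apply Rabs_def2 in Hz. unfold mean_capped.
      destruct (Rle_dec z Phimax); [lra|reflexivity].
    + unfold survival. destruct (Rle_dec q Phimax); [lra|]. apply derivable_pt_lim_const.
Qed.

Lemma mean_capped_below (q : R) : q <= Phimax -> mean_capped q = capped_below q.
Proof. intros H. unfold mean_capped. destruct (Rle_dec q Phimax); [reflexivity|lra]. Qed.

Lemma mean_capped_above (q : R) : Phimax <= q -> mean_capped q = mean_demand.
Proof.
  intros H. unfold mean_capped. destruct (Rle_dec q Phimax); [|reflexivity].
  replace q with Phimax by lra. exact capped_below_Phimax.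
Qed.

Lemma capped_below_lt (q1 q2 : R) : 0 < q1 < q2 -> q2 <= Phimax ->
  capped_below q1 < capped_below q2.
Proof.
  intros H H2.
  destruct (MVT_cor2 capped_below (fun q => 1 - demand_cdf q) q1 q2) as [c [Hc1 Hc2]]; [lra| |].
  - intros c Hc. apply capped_below_deriv. lra.
  - assert (demand_cdf c < 1) by (apply demand_cdf_lt1; lra). nra.
Qed.

Lemma mean_capped_lt (q1 q2 : R) : 0 < q1 < q2 -> q1 < Phimax ->
  mean_capped q1 < mean_capped q2.
Proof.
  intros H H1. rewrite mean_capped_below by lra. destruct (Rle_dec q2 Phimax).
  - rewrite mean_capped_below by lra. apply capped_below_lt; lra.
  - rewrite mean_capped_above, <- capped_below_Phimax by lra. apply capped_below_lt; lra.
Qed.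

Lemma mean_capped_le (q1 q2 : R) : 0 < q1 <= q2 -> mean_capped q1 <= mean_capped q2.
Proof.
  intros H. destruct (Req_dec q1 q2) as [->|Hne]; [lra|].
  destruct (Rlt_dec q1 Phimax); [left; apply mean_capped_lt; lra|].
  rewrite !mean_capped_above by lra. lra.
Qed.

Lemma mean_capped_lt_mean (q : R) : 0 < q < Phimax -> mean_capped q < mean_demand.
Proof. intros H. rewrite <- (mean_capped_above Phimax) by lra. apply mean_capped_lt; lra. Qed.

Lemma mean_capped_pos (q : R) : 0 < q -> 0 < mean_capped q.
Proof.
  intros Hq. unfold mean_capped, capped_below, mean_demand. destruct (Rle_dec q Phimax).
  - destruct (Req_dec q Phimax) as [->|Hne].
    + rewrite demand_cdf_Phimax. apply Rmult_lt_0_compat; [lra|].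
      apply Rmult_lt_reg_r with (2 - sigma); [lra|]. field_simplify; lra.
    + assert (demand_cdf q < 1) by (apply demand_cdf_lt1; lra).
      apply Rmult_lt_0_compat; [exact Hq|].
      assert (demand_cdf q / (2 - sigma) < 1); [|lra].
      apply Rmult_lt_reg_r with (2 - sigma); [lra|]. field_simplify; lra.
  - apply Rdiv_lt_0_compat; nra.
Qed.

Lemma mean_capped_le_id (q : R) : 0 < q -> mean_capped q <= q.
Proof.
  intros Hq. unfold mean_capped, capped_below, mean_demand. destruct (Rle_dec q Phimax).
  - pose proof (demand_cdf_pos q).
    assert (0 < demand_cdf q / (2 - sigma)) by (apply Rdiv_lt_0_compat; lra). nra.
  - apply Rle_trans with Phimax; [|lra].
    apply Rmult_le_reg_r with (2 - sigma); [lra|]. field_simplify; nra.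
Qed.

(* A user facing the effective price y = p kavg sends w(t) min(Phi, Q(y)) in
   slot t, where Q(y) = (theta/y)^(1/(1-theta)) is the demand cap. *)
Definition demand_cap (y : R) : R := Rpower (theta / y) (1 / (1 - theta)).

Lemma demand_cap_pos (y : R) : 0 < demand_cap y.
Proof. apply Rpower_pos. Qed.

Lemma demand_cap_lt (y1 y2 : R) : 0 < y1 < y2 -> demand_cap y2 < demand_cap y1.
Proof.
  intros H. unfold demand_cap. apply Rlt_Rpower_l; [apply Rdiv_lt_0_compat; lra|].
  split; [apply Rdiv_lt_0_compat; lra|]. unfold Rdiv.
  apply Rmult_lt_compat_l; [lra|]. apply Rinv_lt_contravar; nra.
Qed.

Lemma demand_cap_deriv (k p : R) : 0 < k -> 0 < p ->
  derivable_pt_lim (fun p => demand_cap (p * k)) p (- demand_cap (p * k) / ((1 - theta) * p)).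
Proof.
  intros Hk Hp. assert (Hpk : 0 < p * k) by nra.
  assert (Hpos : 0 < theta * / (p * k)) by (apply Rdiv_lt_0_compat; lra).
  apply is_derive_Reals. unfold demand_cap, Rpower. auto_derive.
  - repeat split; auto; lra.
  - unfold Rdiv. field. repeat split; lra.
Qed.

Definition traffic (k p : R) : R := mean_capped (demand_cap (p * k)).

Lemma Xtot_closed (k p : R) : Xtot n w Nhat sigma Phimax theta k p = Nhat * traffic k p.
Proof.
  unfold Xtot. f_equal. apply RInt_of_is_RInt.
  eapply is_RInt_ext; [|apply (mean_capped_integral (demand_cap (p * k))), demand_cap_pos].
  intros x _. simpl. unfold xstar. rewrite sumT_scal_r, Hwsum, Rmult_1_r. reflexivity.
Qed.

Lemma Rev_closed (k p : R) :
  Rev n w Nhat sigma Phimax theta k eta p = (p - eta) * k * (Nhat * traffic k p).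
Proof. unfold Rev. rewrite Xtot_closed. reflexivity. Qed.

Lemma Apeak_closed (k kp p : R) :
  Apeak n w Nhat sigma Phimax theta k kp p = kp * (Nhat * traffic k p).
Proof. unfold Apeak. rewrite Xtot_closed. reflexivity. Qed.

Lemma traffic_pos (k p : R) : 0 < traffic k p.
Proof. apply mean_capped_pos, demand_cap_pos. Qed.

Lemma traffic_le (k p1 p2 : R) : 0 < k -> 0 < p1 <= p2 -> traffic k p2 <= traffic k p1.
Proof.
  intros Hk H. destruct (Req_dec p1 p2) as [->|Hne]; [lra|].
  apply mean_capped_le. split; [apply demand_cap_pos|].
  left. apply demand_cap_lt. split; nra.
Qed.

Lemma traffic_lt (k p1 p2 : R) : 0 < k -> 0 < p1 < p2 -> demand_cap (p2 * k) < Phimax ->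
  traffic k p2 < traffic k p1.
Proof.
  intros Hk H HQ. apply mean_capped_lt; [|exact HQ].
  split; [apply demand_cap_pos|]. apply demand_cap_lt. split; nra.
Qed.

Lemma traffic_deriv (k p : R) : 0 < k -> 0 < p ->
  derivable_pt_lim (traffic k) p
    (survival (demand_cap (p * k)) * (- demand_cap (p * k) / ((1 - theta) * p))).
Proof.
  intros Hk Hp. apply (derivable_pt_lim_comp (fun p => demand_cap (p * k)) mean_capped).
  - apply demand_cap_deriv; assumption.
  - apply mean_capped_deriv, demand_cap_pos.
Qed.

Definition rev_slope (k p : R) : R :=
  k * Nhat * (traffic k p - (p - eta) * survival (demand_cap (p * k)) *
                            demand_cap (p * k) / ((1 - theta) * p)).

Lemma Rev_deriv (k p : R) : 0 < k -> 0 < p ->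
  derivable_pt_lim (Rev n w Nhat sigma Phimax theta k eta) p (rev_slope k p).
Proof.
  intros Hk Hp.
  apply derivable_pt_lim_ext with (fun p => (p - eta) * k * (Nhat * traffic k p));
    [intro z; symmetry; apply Rev_closed|].
  replace (rev_slope k p) with
    (k * (Nhat * traffic k p) + (p - eta) * k * (Nhat * (survival (demand_cap (p * k)) *
                                (- demand_cap (p * k) / ((1 - theta) * p))))).
  - apply (derivable_pt_lim_mult (fun p => (p - eta) * k) (fun p => Nhat * traffic k p)).
    + apply is_derive_Reals. auto_derive; [exact I|ring].
    + apply derivable_pt_lim_scal, traffic_deriv; assumption.
  - unfold rev_slope. field. lra.
Qed.

(** Where the cap binds (Q(p k) < Phimax), R'(p) is a positive factor times
    eta k - K(p k), with K(y) = y phi(F(Q(y))) and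
    phi(s) = (theta - c s)/(1 - s), c = (1 - sigma + theta)/(2 - sigma).
    K is strictly increasing on the half-line where phi(F(Q(y))) > 0, and
    R' > 0 everywhere else; so R'(p) = 0 exactly when K(p k) = eta k. *)

Definition foc_const : R := (1 - sigma + theta) / (2 - sigma).

Definition foc_factor (s : R) : R := (theta - foc_const * s) / (1 - s).

Definition foc_map (y : R) : R := y * foc_factor (demand_cdf (demand_cap y)).

Definition foc_domain (y : R) : Prop :=
  0 < y /\ demand_cap y < Phimax /\ 0 < foc_factor (demand_cdf (demand_cap y)).

Lemma foc_const_bounds : theta < foc_const < 1.
Proof. unfold foc_const. split; apply Rmult_lt_reg_r with (2 - sigma); try lra; field_simplify; nra. Qed.

(* phi(s) = c - b/(1-s) with b > 0, so phi is strictly decreasing and below 1 on [0, 1). *)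
Lemma foc_factor_alt (s : R) : s < 1 ->
  foc_factor s = foc_const - ((1 - theta) * (1 - sigma) / (2 - sigma)) / (1 - s).
Proof. intros Hs. unfold foc_factor, foc_const. field. lra. Qed.

Lemma foc_factor_lt (s1 s2 : R) : s1 < s2 < 1 -> foc_factor s2 < foc_factor s1.
Proof.
  intros H. rewrite !foc_factor_alt by lra.
  assert (0 < (1 - theta) * (1 - sigma) / (2 - sigma))
    by (apply Rdiv_lt_0_compat; [apply Rmult_lt_0_compat|]; lra).
  apply Rplus_lt_compat_l, Ropp_lt_contravar. unfold Rdiv.
  apply Rmult_lt_compat_l; [assumption|]. apply Rinv_lt_contravar; nra.
Qed.

Lemma foc_factor_lt1 (s : R) : 0 <= s < 1 -> foc_factor s < 1.
Proof.
  intros H. rewrite foc_factor_alt by lra. pose proof foc_const_bounds.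
  assert (0 < (1 - theta) * (1 - sigma) / (2 - sigma) / (1 - s)); [|lra].
  apply Rdiv_lt_0_compat; [apply Rdiv_lt_0_compat; [apply Rmult_lt_0_compat|]|]; lra.
Qed.

Definition slope_factor (k p : R) : R :=
  Nhat * demand_cap (p * k) * (1 - demand_cdf (demand_cap (p * k))) / ((1 - theta) * p).

Lemma slope_factor_pos (k p : R) : 0 < p -> demand_cap (p * k) < Phimax -> 0 < slope_factor k p.
Proof.
  intros Hp HQ. pose proof (demand_cap_pos (p * k)).
  assert (demand_cdf (demand_cap (p * k)) < 1) by (apply demand_cdf_lt1; lra).
  unfold slope_factor. apply Rdiv_lt_0_compat; [|nra]. apply Rmult_lt_0_compat; [|lra]. nra.
Qed.

Lemma rev_slope_factored (k p : R) : 0 < p -> demand_cap (p * k) < Phimax ->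
  rev_slope k p = slope_factor k p * (eta * k - foc_map (p * k)).
Proof.
  intros Hp HQ. assert (demand_cdf (demand_cap (p * k)) < 1)
    by (apply demand_cdf_lt1; split; [apply demand_cap_pos|exact HQ]).
  unfold rev_slope, slope_factor, traffic, survival, foc_map, foc_factor, foc_const.
  rewrite mean_capped_below by lra. unfold capped_below.
  destruct (Rle_dec (demand_cap (p * k)) Phimax); [|lra]. field. repeat split; lra.
Qed.

(* When nobody's demand is capped, revenue grows linearly with the price. *)
Lemma rev_slope_uncapped (k p : R) : 0 < k -> 0 < p -> Phimax <= demand_cap (p * k) ->
  0 < rev_slope k p.
Proof.
  intros Hk Hp HQ. unfold rev_slope, traffic, survival.
  rewrite mean_capped_above by exact HQ.
  destruct (Rle_dec (demand_cap (p * k)) Phimax).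
  - replace (demand_cap (p * k)) with Phimax by lra. rewrite demand_cdf_Phimax.
    replace (1 - 1) with 0 by ring.
    replace (mean_demand - (p - eta) * 0 * Phimax / ((1 - theta) * p)) with mean_demand by (field; lra).
    apply Rmult_lt_0_compat; [nra|]. unfold mean_demand. apply Rdiv_lt_0_compat; nra.
  - replace (mean_demand - (p - eta) * 0 * demand_cap (p * k) / ((1 - theta) * p))
      with mean_demand by (field; lra).
    apply Rmult_lt_0_compat; [nra|]. unfold mean_demand. apply Rdiv_lt_0_compat; nra.
Qed.

Lemma rev_slope_outside (k p : R) : 0 < k -> 0 < p -> ~ foc_domain (p * k) -> 0 < rev_slope k p.
Proof.
  intros Hk Hp HD. destruct (Rle_dec Phimax (demand_cap (p * k))) as [H|H].
  - apply rev_slope_uncapped; assumption.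
  - rewrite rev_slope_factored by lra. apply Rmult_lt_0_compat; [apply slope_factor_pos; lra|].
    assert (foc_factor (demand_cdf (demand_cap (p * k))) <= 0).
    { apply Rnot_lt_le. intro. apply HD. split; [nra|]. split; lra. }
    unfold foc_map. assert (0 < p * k) by nra. nra.
Qed.

Lemma foc_domain_up (y1 y2 : R) : foc_domain y1 -> y1 < y2 -> foc_domain y2.
Proof.
  intros [H1 [H2 H3]] H. pose proof (demand_cap_lt y1 y2 (conj H1 H)).
  pose proof (demand_cap_pos y2). split; [lra|]. split; [lra|].
  apply Rlt_trans with (1 := H3). apply foc_factor_lt. split.
  - apply demand_cdf_lt. lra.
  - apply demand_cdf_lt1. lra.
Qed.

Lemma foc_map_lt (y1 y2 : R) : foc_domain y1 -> foc_domain y2 -> y1 < y2 -> foc_map y1 < foc_map y2.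
Proof.
  intros [H1 [H2 H3]] [H1' [H2' H3']] H. pose proof (demand_cap_lt y1 y2 (conj H1 H)).
  pose proof (demand_cap_pos y2). unfold foc_map.
  assert (foc_factor (demand_cdf (demand_cap y1)) < foc_factor (demand_cdf (demand_cap y2))).
  { apply foc_factor_lt. split; [apply demand_cdf_lt; lra|apply demand_cdf_lt1; lra]. }
  nra.
Qed.

Definition foc_map_slope (y : R) : R :=
  foc_factor (demand_cdf (demand_cap y)) +
  (1 - sigma) * (1 - sigma) * demand_cdf (demand_cap y) /
    ((2 - sigma) * (1 - demand_cdf (demand_cap y)) ^ 2).

Lemma demand_cdf_cap (y : R) : demand_cdf (demand_cap y) =
  Rpower (theta / y) (1 / (1 - theta) * (1 - sigma)) / Rpower Phimax (1 - sigma).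
Proof. unfold demand_cdf, demand_cap. rewrite Rpower_mult. reflexivity. Qed.

Lemma ratio_map_deriv (a B t c y : R) : 0 < y -> 0 < t -> B <> 0 ->
  exp (a * ln (t / y)) / B <> 1 ->
  is_derive (fun y => y * ((t - c * (exp (a * ln (t / y)) / B)) / (1 - exp (a * ln (t / y)) / B))) y
    ((t - c * (exp (a * ln (t / y)) / B)) / (1 - exp (a * ln (t / y)) / B)
     - a * (exp (a * ln (t / y)) / B) * (t - c) / (1 - exp (a * ln (t / y)) / B) ^ 2).
Proof.
  intros Hy Ht HB Hu.
  assert (Hty : 0 < t * / y) by (apply Rmult_lt_0_compat; [lra|apply Rinv_0_lt_compat; lra]).
  assert (H1 : 1 + - (exp (a * ln (t * / y)) * / B) <> 0) by (unfold Rdiv in Hu; intro; apply Hu; lra).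
  auto_derive.
  - repeat split; (assumption || lra).
  - unfold Rdiv. set (E := exp (a * ln (t * / y))) in *. field. repeat split; try (assumption || lra).
    intro HE. apply H1. replace E with B by lra. field. exact HB.
Qed.

Lemma foc_map_deriv (y : R) : 0 < y -> demand_cdf (demand_cap y) < 1 ->
  derivable_pt_lim foc_map y (foc_map_slope y).
Proof.
  intros Hy Hs. pose proof (Rpower_pos Phimax (1 - sigma)) as HB.
  unfold foc_map_slope. rewrite demand_cdf_cap. rewrite demand_cdf_cap in Hs.
  apply derivable_pt_lim_ext with
    (fun y => y * foc_factor (Rpower (theta / y) (1 / (1 - theta) * (1 - sigma)) / Rpower Phimax (1 - sigma))).
  { intros z. unfold foc_map. rewrite demand_cdf_cap. reflexivity. }
  apply is_derive_Reals. unfold foc_factor.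
  set (B := Rpower Phimax (1 - sigma)) in *. set (a := 1 / (1 - theta) * (1 - sigma)) in *.
  assert (Hu : exp (a * ln (theta / y)) / B <> 1) by (change (Rpower (theta / y) a / B <> 1); lra).
  pose proof (ratio_map_deriv a B theta foc_const y Hy ltac:(lra) ltac:(lra) Hu) as H.
  match type of H with is_derive _ _ ?l2 =>
    match goal with |- is_derive _ _ ?l => replace l with l2; [exact H|] end end.
  unfold Rpower. set (E := exp (a * ln (theta / y))) in *. unfold a, foc_const.
  field. repeat split; try lra. intro HE. apply Hu. replace E with B by lra. field. lra.
Qed.

Lemma foc_map_slope_pos (y : R) : foc_domain y -> 0 < foc_map_slope y.
Proof.
  intros [H1 [H2 H3]]. unfold foc_map_slope.
  pose proof (demand_cdf_lt1 (demand_cap y) (conj (demand_cap_pos y) H2)).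
  pose proof (demand_cdf_pos (demand_cap y)).
  assert (0 < (1 - sigma) * (1 - sigma) * demand_cdf (demand_cap y) /
              ((2 - sigma) * (1 - demand_cdf (demand_cap y)) ^ 2)); [|lra].
  apply Rdiv_lt_0_compat; [apply Rmult_lt_0_compat; nra|].
  apply Rmult_lt_0_compat; [lra|apply pow_lt; lra].
Qed.

Definition price_at_cdf (s : R) : R :=
  theta / Rpower (Phimax * Rpower s (1 / (1 - sigma))) (1 - theta).

Lemma price_at_cdf_pos (s : R) : 0 < price_at_cdf s.
Proof. apply Rdiv_lt_0_compat; [lra|apply Rpower_pos]. Qed.

Lemma cap_at_price_at_cdf (s : R) : 0 < s ->
  demand_cap (price_at_cdf s) = Phimax * Rpower s (1 / (1 - sigma)).
Proof.
  intros Hs. unfold demand_cap, price_at_cdf.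
  assert (HP : 0 < Phimax * Rpower s (1 / (1 - sigma))) by (apply Rmult_lt_0_compat; [lra|apply Rpower_pos]).
  pose proof (Rpower_pos (Phimax * Rpower s (1 / (1 - sigma))) (1 - theta)).
  replace (theta / (theta / Rpower (Phimax * Rpower s (1 / (1 - sigma))) (1 - theta)))
    with (Rpower (Phimax * Rpower s (1 / (1 - sigma))) (1 - theta)) by (field; lra).
  rewrite Rpower_mult. replace ((1 - theta) * (1 / (1 - theta))) with 1 by (field; lra).
  apply Rpower_1. exact HP.
Qed.

Lemma cdf_at_price_at_cdf (s : R) : 0 < s -> demand_cdf (demand_cap (price_at_cdf s)) = s.
Proof.
  intros Hs. rewrite cap_at_price_at_cdf by exact Hs. unfold demand_cdf.
  rewrite <- Rpower_mult_distr by (try apply Rpower_pos; lra).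
  rewrite Rpower_mult. replace (1 / (1 - sigma) * (1 - sigma)) with 1 by (field; lra).
  rewrite Rpower_1 by exact Hs. field. apply Rgt_not_eq, Rpower_pos.
Qed.

(* phi vanishes at s0 = theta / c; the domain of K starts where F(Q(y)) = s0. *)
Definition foc_root : R := theta / foc_const.

Lemma foc_root_bounds : 0 < foc_root < 1.
Proof.
  pose proof foc_const_bounds. unfold foc_root. split; [apply Rdiv_lt_0_compat; lra|].
  apply Rmult_lt_reg_r with foc_const; [lra|]. field_simplify; lra.
Qed.

Lemma foc_factor_root : foc_factor foc_root = 0.
Proof.
  pose proof foc_const_bounds. pose proof foc_root_bounds.
  unfold foc_factor, foc_root in *. field. lra.
Qed.

Definition foc_start : R := price_at_cdf foc_root.

Lemma foc_start_pos : 0 < foc_start.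
Proof. apply price_at_cdf_pos. Qed.

Lemma foc_start_cdf : demand_cdf (demand_cap foc_start) = foc_root.
Proof. apply cdf_at_price_at_cdf. pose proof foc_root_bounds. lra. Qed.

Lemma foc_map_start : foc_map foc_start = 0.
Proof. unfold foc_map. rewrite foc_start_cdf, foc_factor_root. ring. Qed.

(* Beyond y0, F(Q(y)) <= s0 < 1, so K is differentiable there. *)
Lemma cdf_beyond_start (y : R) : foc_start <= y -> demand_cdf (demand_cap y) <= foc_root.
Proof.
  intros [H| <-]; [|rewrite foc_start_cdf; lra].
  rewrite <- foc_start_cdf. left. apply demand_cdf_lt.
  split; [apply demand_cap_pos|]. apply demand_cap_lt. pose proof foc_start_pos. lra.
Qed.

Lemma foc_domain_iff (y : R) : foc_domain y <-> foc_start < y.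
Proof.
  pose proof foc_root_bounds as Hroot. pose proof foc_start_pos as Hstart. split.
  - intros [H1 [H2 H3]]. apply Rnot_le_lt. intro H.
    destruct (Req_dec y foc_start) as [->|E].
    { rewrite foc_start_cdf, foc_factor_root in H3. lra. }
    assert (demand_cap foc_start < demand_cap y) by (apply demand_cap_lt; lra).
    assert (foc_root < demand_cdf (demand_cap y))
      by (rewrite <- foc_start_cdf; apply demand_cdf_lt; split; [apply demand_cap_pos|assumption]).
    assert (foc_factor (demand_cdf (demand_cap y)) < foc_factor foc_root)
      by (apply foc_factor_lt; split; [assumption|apply demand_cdf_lt1; split; [apply demand_cap_pos|assumption]]).
    rewrite foc_factor_root in *. lra.
  - intros H. assert (Hs : demand_cdf (demand_cap y) < foc_root).
    { rewrite <- foc_start_cdf. apply demand_cdf_lt.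
      split; [apply demand_cap_pos|]. apply demand_cap_lt. lra. }
    split; [lra|]. split.
    + apply Rnot_le_lt. intro H'. apply demand_cdf_ge1 in H'. lra.
    + rewrite <- foc_factor_root. apply foc_factor_lt. lra.
Qed.

(* K is unbounded on its domain: K(y) >= y phi(s0/2) for large y. *)
Lemma foc_map_unbounded (b : R) : 0 < b -> exists y, foc_start < y /\ b < foc_map y.
Proof.
  intros Hb. pose proof foc_root_bounds. set (s2 := foc_root / 2).
  assert (Hphi2 : 0 < foc_factor s2)
    by (rewrite <- foc_factor_root; apply foc_factor_lt; unfold s2; lra).
  assert (Hy2 : 0 < b / foc_factor s2) by (apply Rdiv_lt_0_compat; lra).
  pose proof (price_at_cdf_pos s2).
  set (y2 := price_at_cdf s2 + b / foc_factor s2 + 1).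
  assert (Hcdf : demand_cdf (demand_cap y2) < s2).
  { rewrite <- (cdf_at_price_at_cdf s2) by (unfold s2; lra). apply demand_cdf_lt.
    split; [apply demand_cap_pos|]. apply demand_cap_lt. unfold y2. lra. }
  assert (Hphi : foc_factor s2 < foc_factor (demand_cdf (demand_cap y2)))
    by (apply foc_factor_lt; unfold s2 in *; lra).
  exists y2. split.
  - apply foc_domain_iff. split; [unfold y2; lra|]. split; [|lra].
    apply Rnot_le_lt. intro H'. apply demand_cdf_ge1 in H'. unfold s2 in *. lra.
  - unfold foc_map. assert (b = b / foc_factor s2 * foc_factor s2) by (field; lra).
    assert (b < y2 * foc_factor s2); [|nra].
    unfold y2. rewrite !Rmult_plus_distr_r. nra.
Qed.

Lemma foc_solution_exists (k : R) : 0 < k -> exists y, foc_domain y /\ foc_map y = eta * k.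
Proof.
  intros Hk. pose proof foc_root_bounds. pose proof foc_start_pos.
  assert (Hek : 0 < eta * k) by nra.
  destruct (foc_map_unbounded (eta * k) Hek) as [y2 [Hy2 HK2]].
  assert (Hcont : forall z, foc_start <= z <= y2 -> continuity_pt (fun y => foc_map y - eta * k) z).
  { intros z Hz. apply continuity_pt_minus; [|apply continuity_pt_const; intros ? ?; reflexivity].
    apply derivable_pt_lim_continuous with (foc_map_slope z). apply foc_map_deriv; [lra|].
    pose proof (cdf_beyond_start z ltac:(lra)). lra. }
  destruct (Ranalysis5.IVT_interv (fun y => foc_map y - eta * k) foc_start y2 Hcont Hy2)
    as [z [Hz Hfz]]; [rewrite foc_map_start; lra|lra|].
  exists z. split; [|lra]. apply foc_domain_iff.
  destruct (Req_dec z foc_start) as [->|Hne]; [rewrite foc_map_start in Hfz; lra|lra].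
Qed.

Definition critical_level (k : R) : R :=
  epsilon (inhabits 0) (fun y => foc_domain y /\ foc_map y = eta * k).

Definition critical_price (k : R) : R := critical_level k / k.

Section Critical.
Variable k : R.
Hypothesis Hk : 0 < k.

Lemma critical_level_spec : foc_domain (critical_level k) /\ foc_map (critical_level k) = eta * k.
Proof. unfold critical_level. apply epsilon_spec, foc_solution_exists, Hk. Qed.

Lemma critical_price_level : critical_price k * k = critical_level k.
Proof. unfold critical_price. field. lra. Qed.

(* The critical price lies above the marginal cost eta, since phi < 1. *)
Lemma critical_price_gt_eta : eta < critical_price k.
Proof.
  destruct critical_level_spec as [[H1 [H2 H3]] HK].
  apply Rmult_lt_reg_r with k; [exact Hk|]. rewrite critical_price_level, <- HK.
  unfold foc_map. assert (foc_factor (demand_cdf (demand_cap (critical_level k))) < 1); [|nra].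
  apply foc_factor_lt1. split; [left; apply demand_cdf_pos|].
  apply demand_cdf_lt1. split; [apply demand_cap_pos|exact H2].
Qed.

Lemma rev_slope_below (p : R) : 0 < p -> p < critical_price k -> 0 < rev_slope k p.
Proof.
  intros Hp H. destruct critical_level_spec as [Hys HK].
  assert (Hpk : p * k < critical_level k)
    by (rewrite <- critical_price_level; apply Rmult_lt_compat_r; assumption).
  destruct (classic (foc_domain (p * k))) as [HD|HD].
  - pose proof (proj1 (proj2 HD)) as HQ. rewrite rev_slope_factored by assumption.
    apply Rmult_lt_0_compat; [apply slope_factor_pos; assumption|].
    assert (foc_map (p * k) < foc_map (critical_level k)) by (apply foc_map_lt; assumption). lra.
  - apply rev_slope_outside; assumption.
Qed.

Lemma foc_domain_above_critical (p : R) : critical_price k < p -> foc_domain (p * k).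
Proof.
  intros H. destruct critical_level_spec as [Hys _].
  apply foc_domain_up with (critical_level k); [exact Hys|].
  rewrite <- critical_price_level. apply Rmult_lt_compat_r; assumption.
Qed.

Lemma rev_slope_above (p : R) : critical_price k < p -> rev_slope k p < 0.
Proof.
  intros H. destruct critical_level_spec as [Hys HK]. pose proof critical_price_gt_eta.
  pose proof (foc_domain_above_critical p H) as HD.
  pose proof (proj1 (proj2 HD)) as HQ. rewrite rev_slope_factored by (assumption || lra).
  assert (foc_map (critical_level k) < foc_map (p * k)).
  { apply foc_map_lt; [assumption|assumption|].
    rewrite <- critical_price_level. apply Rmult_lt_compat_r; assumption. }
  pose proof (slope_factor_pos k p ltac:(lra) HQ). nra.
Qed.

Lemma rev_slope_critical : rev_slope k (critical_price k) = 0.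
Proof.
  destruct critical_level_spec as [[_ [HQ _]] HK]. pose proof critical_price_gt_eta.
  rewrite rev_slope_factored by (rewrite ?critical_price_level; assumption || lra).
  rewrite critical_price_level, HK. ring.
Qed.

Lemma rev_slope_zero (p : R) : 0 < p -> rev_slope k p = 0 -> p = critical_price k.
Proof.
  intros Hp H. destruct (Rtotal_order p (critical_price k)) as [H1|[H1|H1]]; [|exact H1|].
  - pose proof (rev_slope_below p Hp H1). lra.
  - pose proof (rev_slope_above p H1). lra.
Qed.

Lemma Rev_increasing (a b : R) : 0 < a -> a < b -> b <= critical_price k ->
  Rev n w Nhat sigma Phimax theta k eta a < Rev n w Nhat sigma Phimax theta k eta b.
Proof.
  intros Ha Hab Hb.
  destruct (MVT_cor2 (Rev n w Nhat sigma Phimax theta k eta) (rev_slope k) a b Hab)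
    as [c [Hc1 Hc2]]; [intros c Hc; apply Rev_deriv; lra|].
  assert (0 < rev_slope k c) by (apply rev_slope_below; lra). nra.
Qed.

Lemma Rev_decreasing (a b : R) : critical_price k <= a -> a < b ->
  Rev n w Nhat sigma Phimax theta k eta b < Rev n w Nhat sigma Phimax theta k eta a.
Proof.
  intros Ha Hab. pose proof critical_price_gt_eta.
  destruct (MVT_cor2 (Rev n w Nhat sigma Phimax theta k eta) (rev_slope k) a b Hab)
    as [c [Hc1 Hc2]]; [intros c Hc; apply Rev_deriv; lra|].
  assert (rev_slope k c < 0) by (apply rev_slope_above; lra). nra.
Qed.

End Critical.

Lemma Rev_pos_iff (k p : R) : 0 < k -> (0 < Rev n w Nhat sigma Phimax theta k eta p <-> eta < p).
Proof.
  intros Hk. rewrite Rev_closed. pose proof (traffic_pos k p).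
  assert (0 < k * (Nhat * traffic k p)) by (apply Rmult_lt_0_compat; [|apply Rmult_lt_0_compat]; assumption).
  rewrite Rmult_assoc. split; intro; nra.
Qed.

Lemma Pset_iff (k kp C p : R) : 0 < k ->
  Pset n w Nhat sigma Phimax theta k kp eta C p <-> eta < p /\ kp * (Nhat * traffic k p) <= C.
Proof. intros Hk. unfold Pset. rewrite Apeak_closed, Rev_pos_iff by exact Hk. tauto. Qed.

(* High prices are feasible: X(p) <= Q(p k) -> 0. *)
Lemma Pset_nonempty (k kp C : R) : 0 < k -> 0 < kp -> 0 < C ->
  exists p, Pset n w Nhat sigma Phimax theta k kp eta C p.
Proof.
  intros Hk Hkp HC. set (e := C / (kp * Nhat)).
  assert (He : 0 < e) by (apply Rdiv_lt_0_compat; nra).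
  set (R1 := Rpower e (1 - theta)). assert (HR1 : 0 < R1) by apply Rpower_pos.
  assert (H1 : 0 < theta / (k * R1)) by (apply Rdiv_lt_0_compat; nra).
  set (p := eta + theta / (k * R1)).
  exists p. rewrite Pset_iff by exact Hk. split; [unfold p; lra|].
  assert (Hpk : p * k = eta * k + theta / R1) by (unfold p; field; lra).
  assert (Hratio : theta / (p * k) <= R1).
  { assert (0 < theta / R1) by (apply Rdiv_lt_0_compat; lra).
    apply Rmult_le_reg_r with (p * k); [nra|].
    replace (theta / (p * k) * (p * k)) with theta by (field; split; unfold p; lra).
    rewrite Hpk. replace (R1 * (eta * k + theta / R1)) with (R1 * eta * k + theta) by (field; lra).
    assert (0 < R1 * eta * k) by (apply Rmult_lt_0_compat; [apply Rmult_lt_0_compat|]; lra). lra. }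
  assert (HQ : demand_cap (p * k) <= e).
  { unfold demand_cap. apply Rle_trans with (Rpower R1 (1 / (1 - theta))).
    - apply Rle_Rpower_l; [left; apply Rdiv_lt_0_compat; lra|].
      split; [|exact Hratio]. apply Rdiv_lt_0_compat; [lra|]. rewrite Hpk.
      assert (0 < theta / R1) by (apply Rdiv_lt_0_compat; lra). nra.
    - unfold R1. rewrite Rpower_mult. replace ((1 - theta) * (1 / (1 - theta))) with 1 by (field; lra).
      rewrite Rpower_1; lra. }
  pose proof (mean_capped_le_id (demand_cap (p * k)) (demand_cap_pos _)).
  assert (kp * (Nhat * e) = C) by (unfold e; field; lra).
  unfold traffic. assert (Nhat * mean_capped (demand_cap (p * k)) <= Nhat * e) by (apply Rmult_le_compat_l; lra).
  assert (kp * (Nhat * mean_capped (demand_cap (p * k))) <= kp * (Nhat * e)) by (apply Rmult_le_compat_l; lra).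
  lra.
Qed.

(* P is an interval, since the load A is non-increasing in the price. *)
Lemma Pset_interval (k kp C : R) : 0 < k -> 0 < kp ->
  interval_set (Pset n w Nhat sigma Phimax theta k kp eta C).
Proof.
  intros Hk Hkp a b c Ha Hc Hab Hbc. rewrite Pset_iff in * by exact Hk.
  split; [lra|]. assert (traffic k b <= traffic k a) by (apply traffic_le; lra).
  assert (0 < kp * Nhat) by nra. nra.
Qed.

Lemma Pset_has_glb (k kp C : R) : 0 < k -> 0 < kp -> 0 < C ->
  exists m, is_glb (Pset n w Nhat sigma Phimax theta k kp eta C) m.
Proof.
  intros Hk Hkp HC. apply glb_exists with eta; [apply Pset_nonempty; assumption|].
  intros x Hx. rewrite Pset_iff in Hx by exact Hk. lra.
Qed.

Lemma Pset_glb_ge_eta (k kp C m : R) : 0 < k ->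
  is_glb (Pset n w Nhat sigma Phimax theta k kp eta C) m -> eta <= m.
Proof. intros Hk Hm. apply (glb_ge _ _ _ Hm). intros x Hx. rewrite Pset_iff in Hx by exact Hk. tauto. Qed.

Lemma load_continuous (k kp m : R) : 0 < k -> 0 < m -> forall e, 0 < e ->
  exists d, 0 < d /\ forall p, Rabs (p - m) < d ->
    Rabs (kp * (Nhat * traffic k p) - kp * (Nhat * traffic k m)) < e.
Proof.
  intros Hk Hm. eapply (derivable_pt_lim_eps_delta (fun p => kp * (Nhat * traffic k p)) m).
  apply derivable_pt_lim_scal, derivable_pt_lim_scal, traffic_deriv; assumption.
Qed.

Lemma Pset_glb_saturated (k kp C m : R) : 0 < k -> 0 < kp ->
  is_glb (Pset n w Nhat sigma Phimax theta k kp eta C) m -> eta < m ->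
  kp * (Nhat * traffic k m) = C.
Proof.
  intros Hk Hkp Hglb Hm.
  destruct (Rtotal_order (kp * (Nhat * traffic k m)) C) as [H|[H|H]]; [exfalso| |exfalso]; [|exact H|].
  - (* slightly lower prices would still be feasible *)
    destruct (load_continuous k kp m Hk ltac:(lra) (C - kp * (Nhat * traffic k m))) as [d [Hd Hclose]]; [lra|].
    set (p := Rmax (m - d / 2) ((eta + m) / 2)).
    pose proof (Rmax_l (m - d / 2) ((eta + m) / 2)). pose proof (Rmax_r (m - d / 2) ((eta + m) / 2)).
    assert (Hpm : p < m) by (unfold p; apply Rmax_lub_lt; lra).
    assert (HP : Pset n w Nhat sigma Phimax theta k kp eta C p).
    { rewrite Pset_iff by exact Hk. split; [unfold p in *; lra|].
      pose proof (Hclose p ltac:(rewrite Rabs_left by lra; unfold p in *; lra)) as Hd2.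
      apply Rabs_def2 in Hd2. lra. }
    destruct Hglb as [Hlower _]. apply Hlower in HP. lra.
  - (* feasible prices close to m would violate the capacity *)
    destruct (load_continuous k kp m Hk ltac:(lra) (kp * (Nhat * traffic k m) - C)) as [d [Hd Hclose]]; [lra|].
    destruct (glb_approx _ _ Hglb d Hd) as [x [Hx1 Hx2]].
    assert (Hxm : m <= x) by (destruct Hglb as [Hlower _]; auto).
    rewrite Pset_iff in Hx1 by exact Hk. destruct Hx1 as [_ Hx1].
    pose proof (Hclose x ltac:(rewrite Rabs_pos_eq by lra; lra)) as Hd2. apply Rabs_def2 in Hd2. lra.
Qed.

Lemma Pset_glb_gt_eta (k kp C m : R) : 0 < k -> C < kp * (Nhat * traffic k eta) ->
  is_glb (Pset n w Nhat sigma Phimax theta k kp eta C) m -> eta < m.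
Proof.
  intros Hk Hover Hglb. pose proof (Pset_glb_ge_eta k kp C m Hk Hglb).
  destruct (Req_dec m eta) as [->|]; [exfalso|lra].
  destruct (load_continuous k kp eta Hk Heta (kp * (Nhat * traffic k eta) - C)) as [d [Hd Hclose]]; [lra|].
  destruct (glb_approx _ _ Hglb d Hd) as [x [Hx1 Hx2]].
  rewrite Pset_iff in Hx1 by exact Hk. destruct Hx1 as [Hx1 Hx3].
  pose proof (Hclose x ltac:(rewrite Rabs_pos_eq by lra; lra)) as Hd2. apply Rabs_def2 in Hd2. lra.
Qed.

Lemma saturated_capped (k kp C p : R) : 0 < kp -> C < kp * (Nhat * mean_demand) ->
  kp * (Nhat * traffic k p) = C -> demand_cap (p * k) < Phimax.
Proof.
  intros Hkp Hover Hload. apply Rnot_le_lt. intro HQ.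
  unfold traffic in Hload. rewrite mean_capped_above in Hload by exact HQ. lra.
Qed.

(** * The equilibrium price *)

Section Equilibrium.
Variables (kavg kpeak C : R).
Hypothesis Hkavg : 0 < kavg.
Hypothesis Hkpeak : 0 < kpeak.
Hypothesis HC : 0 < C.

Local Notation Rev_ := (Rev n w Nhat sigma Phimax theta kavg eta).
Local Notation Pset_ := (Pset n w Nhat sigma Phimax theta kavg kpeak eta C).
Local Notation Eq_ := (is_equilibrium n w Nhat sigma Phimax theta kavg kpeak eta C).

Lemma Rev_deriv_value (p l : R) : eta <= p -> derivable_pt_lim Rev_ p l -> l = rev_slope kavg p.
Proof. intros Hp Hl. eapply uniqueness_limite; [exact Hl|apply Rev_deriv; lra]. Qed.

Lemma revenue_unimodal : exists ph, eta < ph /\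
  (forall p, eta <= p < ph -> exists l, derivable_pt_lim Rev_ p l /\ 0 < l) /\
  derivable_pt_lim Rev_ ph 0 /\
  (forall p, ph < p -> exists l, derivable_pt_lim Rev_ p l /\ l < 0).
Proof.
  pose proof (critical_price_gt_eta kavg Hkavg).
  exists (critical_price kavg). split; [assumption|]. split; [|split].
  - intros p Hp. exists (rev_slope kavg p).
    split; [apply Rev_deriv; lra|apply rev_slope_below; lra].
  - rewrite <- (rev_slope_critical kavg Hkavg). apply Rev_deriv; lra.
  - intros p Hp. exists (rev_slope kavg p).
    split; [apply Rev_deriv; lra|apply rev_slope_above; assumption].
Qed.

Section Saturated.
Variables (p0 l : R).
Hypothesis Hglb : is_glb Pset_ p0.
Hypothesis Hder : derivable_pt_lim Rev_ p0 l.
Hypothesis Hl : l < 0.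

Lemma saturated_beyond_critical : critical_price kavg < p0.
Proof.
  pose proof (Pset_glb_ge_eta kavg kpeak C p0 Hkavg Hglb) as Hp0.
  pose proof Hl as Hslope. rewrite (Rev_deriv_value p0 l) in Hslope by assumption.
  apply Rnot_le_lt. intro Hle. destruct (Req_dec p0 (critical_price kavg)) as [E|E].
  - rewrite E, rev_slope_critical in Hslope by exact Hkavg. lra.
  - pose proof (rev_slope_below kavg Hkavg p0 ltac:(lra) ltac:(lra)). lra.
Qed.

Lemma saturated_load : kpeak * (Nhat * traffic kavg p0) = C.
Proof.
  pose proof saturated_beyond_critical. pose proof (critical_price_gt_eta kavg Hkavg).
  apply (Pset_glb_saturated kavg kpeak C p0 Hkavg Hkpeak Hglb). lra.
Qed.

Lemma saturated_feasible : Pset_ p0.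
Proof.
  pose proof saturated_beyond_critical. pose proof (critical_price_gt_eta kavg Hkavg).
  rewrite Pset_iff by exact Hkavg. pose proof saturated_load. split; lra.
Qed.

(* The threshold price is the unique equilibrium: R decreases on P. *)
Lemma saturated_equilibrium (p : R) : Eq_ p <-> p = p0.
Proof.
  pose proof saturated_beyond_critical as Hcrit. pose proof saturated_feasible as HP0.
  assert (Hdec : forall p, p0 < p -> Rev_ p < Rev_ p0)
    by (intros q Hq; apply Rev_decreasing; lra).
  destruct Hglb as [Hlower _]. split.
  - intros [HPp Hmax]. pose proof (Hlower p HPp).
    destruct (Req_dec p p0) as [|Hne]; [assumption|].
    pose proof (Hmax p0 HP0). pose proof (Hdec p ltac:(lra)). lra.
  - intros ->. split; [exact HP0|]. intros p' Hp'. pose proof (Hlower p' Hp').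
    destruct (Req_dec p' p0) as [->|Hne]; [lra|]. left. apply Hdec. lra.
Qed.

Lemma threshold_saturated_near (g : R -> R) :
  (forall k, 0 < k -> is_glb (Pset n w Nhat sigma Phimax theta kavg k eta C) (g k)) ->
  exists r, 0 < r /\ forall k, Rabs (k - kpeak) < r ->
    0 < k /\ eta < g k /\ k * (Nhat * traffic kavg (g k)) = C /\ demand_cap (g k * kavg) < Phimax.
Proof.
  intros Hg. pose proof saturated_beyond_critical as Hcrit. pose proof saturated_load as Hload.
  pose proof (critical_price_gt_eta kavg Hkavg). pose proof (traffic_pos kavg p0).
  pose proof (proj1 (proj2 (foc_domain_above_critical kavg Hkavg p0 Hcrit))) as HQ0.
  (* the load at p0 is below both the load at eta and the uncapped load *)
  set (Gm := Rmin (traffic kavg eta) mean_demand).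
  assert (HGm : Gm <= traffic kavg eta /\ Gm <= mean_demand)
    by (unfold Gm; split; [apply Rmin_l|apply Rmin_r]).
  assert (Hp0Gm : traffic kavg p0 < Gm).
  { apply Rmin_glb_lt; [apply traffic_lt; lra|]. unfold traffic.
    apply mean_capped_lt_mean. split; [apply demand_cap_pos|exact HQ0]. }
  set (kl := C / (Nhat * Gm)).
  assert (Hkl : 0 < kl < kpeak).
  { unfold kl. split; [apply Rdiv_lt_0_compat; nra|].
    apply Rmult_lt_reg_r with (Nhat * Gm); [nra|].
    replace (C / (Nhat * Gm) * (Nhat * Gm)) with C by (field; split; lra). nra. }
  exists (kpeak - kl). split; [lra|]. intros k Hk. apply Rabs_def2 in Hk.
  assert (HkG : C < k * (Nhat * Gm)).
  { apply Rmult_lt_reg_r with (/ (Nhat * Gm)); [apply Rinv_0_lt_compat; nra|].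
    replace (k * (Nhat * Gm) * / (Nhat * Gm)) with k by (field; split; lra).
    unfold kl, Rdiv in *. lra. }
  assert (Heta_k : eta < g k).
  { apply (Pset_glb_gt_eta kavg k C (g k) Hkavg); [|apply Hg; lra].
    apply Rlt_le_trans with (1 := HkG). apply Rmult_le_compat_l; [lra|]. nra. }
  assert (Hload_k : k * (Nhat * traffic kavg (g k)) = C)
    by (apply (Pset_glb_saturated kavg k C (g k)); [assumption|lra|apply Hg; lra|assumption]).
  repeat split; [lra|assumption|assumption|].
  apply (saturated_capped kavg k C); [lra| |assumption].
  apply Rlt_le_trans with (1 := HkG). apply Rmult_le_compat_l; [lra|]. nra.
Qed.

(* Comparative statics: the threshold price increases with kpeak.  Near
   kpeak it solves - X(p0(k)) = - C / (Nhat k), where - X is strictly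
   increasing, and the implicit function lemma applies. *)
Lemma threshold_increasing (g : R -> R) :
  (forall k, 0 < k -> is_glb (Pset n w Nhat sigma Phimax theta kavg k eta C) (g k)) ->
  exists d, derivable_pt_lim g kpeak d /\ 0 < d.
Proof.
  intros Hg. pose proof saturated_beyond_critical as Hcrit.
  destruct (threshold_saturated_near g Hg) as [r [Hr Hnear]].
  pose proof (proj1 (proj2 (foc_domain_above_critical kavg Hkavg p0 Hcrit))) as HQ0.
  pose proof (critical_price_gt_eta kavg Hkavg). pose proof (demand_cap_pos (p0 * kavg)).
  pose proof (demand_cdf_lt1 (demand_cap (p0 * kavg)) ltac:(lra)).
  set (slope := survival (demand_cap (p0 * kavg)) * demand_cap (p0 * kavg) / ((1 - theta) * p0)).
  assert (Hslope : 0 < slope).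
  { unfold slope, survival. destruct (Rle_dec (demand_cap (p0 * kavg)) Phimax); [|lra].
    apply Rdiv_lt_0_compat; apply Rmult_lt_0_compat; lra. }
  exists (C / (Nhat * kpeak ^ 2) / slope). split.
  2: { pose proof (pow_lt kpeak 2 Hkpeak). apply Rdiv_lt_0_compat; [|exact Hslope].
       apply Rdiv_lt_0_compat; [lra|apply Rmult_lt_0_compat; lra]. }
  apply (implicit_derivative (fun p => - traffic kavg p) g (fun k => - C / (Nhat * k))
           (fun p => 0 < p /\ demand_cap (p * kavg) < Phimax) p0 kpeak slope
           (C / (Nhat * kpeak ^ 2)) (p0 - critical_price kavg) r).
  - intros x y [Hx HxQ] [Hy HyQ] Hxy. apply Ropp_lt_contravar, traffic_lt; lra.
  - lra.
  - intros x Hx. apply Rabs_def2 in Hx. split; [lra|].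
    apply (foc_domain_above_critical kavg Hkavg x). lra.
  - replace slope with (- (survival (demand_cap (p0 * kavg)) * (- demand_cap (p0 * kavg) / ((1 - theta) * p0))))
      by (unfold slope; field; lra).
    apply derivable_pt_lim_opp, traffic_deriv; lra.
  - exact Hslope.
  - apply is_derive_Reals. auto_derive; [apply Rmult_integral_contrapositive; lra|field; lra].
  - exact (glb_unique _ _ _ (Hg kpeak Hkpeak) Hglb).
  - exact Hr.
  - intros k Hk. destruct (Hnear k Hk) as [Hk1 [Hk2 [Hk3 Hk4]]].
    split; [split; lra|]. split.
    + apply Rmult_eq_reg_l with (k * Nhat); [|apply Rgt_not_eq, Rmult_lt_0_compat; lra].
      replace (k * Nhat * - traffic kavg (g k)) with (- (k * (Nhat * traffic kavg (g k)))) by ring.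
      rewrite Hk3. field. lra.
    + intros Hne E. apply Hne, (inverse_injective (- C) Nhat); lra.
Qed.

End Saturated.

Lemma threshold_exists : exists g : R -> R, forall k, 0 < k ->
  is_glb (Pset n w Nhat sigma Phimax theta kavg k eta C) (g k).
Proof.
  set (P k m := 0 < k -> is_glb (Pset n w Nhat sigma Phimax theta kavg k eta C) m).
  exists (fun k => epsilon (inhabits 0) (P k)). intros k Hk.
  apply (epsilon_spec (inhabits 0) (P k)); [|exact Hk].
  destruct (Pset_has_glb kavg k C Hkavg Hk HC) as [m Hm]. exists m. intros _. exact Hm.
Qed.

Section Unsaturated.
Variables (p0 l : R).
Hypothesis Hglb : is_glb Pset_ p0.
Hypothesis Hder : derivable_pt_lim Rev_ p0 l.
Hypothesis Hl : 0 < l.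

Lemma unsaturated_below_critical : p0 < critical_price kavg.
Proof.
  pose proof (Pset_glb_ge_eta kavg kpeak C p0 Hkavg Hglb) as Hp0.
  pose proof Hl as Hslope. rewrite (Rev_deriv_value p0 l) in Hslope by assumption.
  apply Rnot_le_lt. intro Hle. destruct (Req_dec p0 (critical_price kavg)) as [E|E].
  - rewrite E, rev_slope_critical in Hslope by exact Hkavg. lra.
  - pose proof (rev_slope_above kavg Hkavg p0 ltac:(lra)). lra.
Qed.

(* The critical price is feasible with spare capacity: some feasible price
   lies below it, and the load decreases strictly up to it. *)
Lemma critical_load_below_capacity :
  kpeak * (Nhat * traffic kavg (critical_price kavg)) < C.
Proof.
  pose proof unsaturated_below_critical as Hcrit.
  destruct (glb_approx _ _ Hglb (critical_price kavg - p0)) as [x [Hx1 Hx2]]; [lra|].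
  assert (Hx0 : p0 <= x) by (destruct Hglb as [Hlower _]; auto).
  rewrite Pset_iff in Hx1 by exact Hkavg. destruct Hx1 as [Hx1 Hx3].
  assert (traffic kavg (critical_price kavg) < traffic kavg x).
  { apply traffic_lt; [assumption|lra|].
    rewrite critical_price_level by exact Hkavg. apply (critical_level_spec kavg Hkavg). }
  assert (0 < kpeak * Nhat) by nra. nra.
Qed.

(* The critical price is the unique equilibrium: R increases on P up to it and decreases after. *)
Lemma unsaturated_equilibrium (p : R) : Eq_ p <-> p = critical_price kavg.
Proof.
  pose proof (critical_price_gt_eta kavg Hkavg).
  assert (HP : Pset_ (critical_price kavg)).
  { rewrite Pset_iff by exact Hkavg. pose proof critical_load_below_capacity. split; lra. }
  assert (Hmax : forall p', Pset_ p' -> p' <> critical_price kavg -> Rev_ p' < Rev_ (critical_price kavg)).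
  { intros p' Hp' Hne. rewrite Pset_iff in Hp' by exact Hkavg.
    destruct (Rtotal_order p' (critical_price kavg)) as [Hlt|[Heq|Hgt]];
      [apply Rev_increasing; lra|contradiction|apply Rev_decreasing; lra]. }
  split.
  - intros [HPp Hopt]. destruct (Req_dec p (critical_price kavg)) as [|Hne]; [assumption|].
    pose proof (Hopt _ HP). pose proof (Hmax p HPp Hne). lra.
  - intros ->. split; [exact HP|]. intros p' Hp'.
    destruct (Req_dec p' (critical_price kavg)) as [->|Hne]; [lra|]. left. apply Hmax; assumption.
Qed.

End Unsaturated.

End Equilibrium.

Lemma critical_price_is_critical (k : R) : 0 < k ->
  eta < critical_price k /\
  derivable_pt_lim (Rev n w Nhat sigma Phimax theta k eta) (critical_price k) 0.
Proof.
  intros Hk. pose proof (critical_price_gt_eta k Hk). split; [assumption|].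
  rewrite <- (rev_slope_critical k Hk). apply Rev_deriv; lra.
Qed.

Lemma critical_price_unique (k p : R) : 0 < k -> eta < p ->
  derivable_pt_lim (Rev n w Nhat sigma Phimax theta k eta) p 0 -> p = critical_price k.
Proof.
  intros Hk Hp Hd. apply rev_slope_zero; [exact Hk|lra|].
  symmetry. eapply uniqueness_limite; [exact Hd|apply Rev_deriv; lra].
Qed.

(* Comparative statics: the critical effective price y(k) = p^(k) k solves
   K(y(k)) = eta k with K strictly increasing, hence y'(k) = eta / K'(y(k)) > 0. *)
Lemma critical_level_increasing (k0 : R) : 0 < k0 ->
  exists d, derivable_pt_lim critical_level k0 d /\ 0 < d.
Proof.
  intros Hk0. destruct (critical_level_spec k0 Hk0) as [Hdom HK].
  pose proof (proj1 (foc_domain_iff _) Hdom) as Hstart.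
  exists (eta / foc_map_slope (critical_level k0)).
  pose proof (foc_map_slope_pos _ Hdom) as Hslope.
  split; [|apply Rdiv_lt_0_compat; assumption].
  apply (implicit_derivative foc_map critical_level (fun k => eta * k) foc_domain
           (critical_level k0) k0 (foc_map_slope (critical_level k0)) eta
           (critical_level k0 - foc_start) k0).
  - intros y1 y2 H1 H2 H3. apply foc_map_lt; assumption.
  - lra.
  - intros y Hy. apply Rabs_def2 in Hy. apply foc_domain_iff. lra.
  - apply foc_map_deriv; [destruct Hdom; assumption|].
    apply demand_cdf_lt1. destruct Hdom as [_ [HQ _]]. split; [apply demand_cap_pos|exact HQ].
  - exact Hslope.
  - apply is_derive_Reals. auto_derive; [exact I|ring].
  - reflexivity.
  - exact Hk0.
  - intros k Hk. apply Rabs_def2 in Hk. destruct (critical_level_spec k ltac:(lra)) as [Hd Hf].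
    split; [exact Hd|]. split; [exact Hf|]. intros Hne E. apply Hne.
    apply Rmult_eq_reg_l with eta; lra.
Qed.

Lemma critical_revenue_increasing (g : R -> R) (k0 : R) : 0 < k0 ->
  (forall k, 0 < k -> eta < g k /\
     derivable_pt_lim (Rev n w Nhat sigma Phimax theta k eta) (g k) 0) ->
  exists d, derivable_pt_lim (fun k => g k * k) k0 d /\ 0 < d.
Proof.
  intros Hk0 Hg. destruct (critical_level_increasing k0 Hk0) as [d [Hd Hpos]].
  exists d. split; [|exact Hpos].
  apply derivable_pt_lim_ball with critical_level k0; [exact Hk0| |exact Hd].
  intros k Hk. apply Rabs_def2 in Hk. destruct (Hg k ltac:(lra)) as [Hgk Hdk].
  rewrite (critical_price_unique k (g k)) by (lra || assumption).
  symmetry. apply critical_price_level. lra.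
Qed.

End Market.

Theorem proposition2
  (n : nat) (w : nat -> R)
  (Nhat C sigma Phimax theta kavg kpeak eta : R)
  (Hn : (1 <= n)%nat)
  (Hw : forall t, (t < n)%nat -> 0 < w t)
  (Hwsum : sumT n w = 1)
  (HNhat : 0 < Nhat) (HC : 0 < C)
  (Hsigma : 0 < sigma < 1) (HPhimax : 0 < Phimax)
  (Htheta : 0 < theta < 1)
  (Hkavg : 0 < kavg <= 1) (Hkpeak : 0 < kpeak <= 1)
  (Heta : 0 < eta) :
  let R_ := Rev n w Nhat sigma Phimax theta kavg eta in
  let A_ := Apeak n w Nhat sigma Phimax theta kavg kpeak in
  let P_ := Pset n w Nhat sigma Phimax theta kavg kpeak eta C in
  let Eq_ := is_equilibrium n w Nhat sigma Phimax theta kavg kpeak eta C in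
  (* (i) unimodality of R on [eta, oo); P non-empty and connected *)
  ( (exists ph, eta < ph /\
       (forall p, eta <= p < ph -> exists l, derivable_pt_lim R_ p l /\ 0 < l) /\
       derivable_pt_lim R_ ph 0 /\
       (forall p, ph < p -> exists l, derivable_pt_lim R_ p l /\ l < 0)) /\
    (exists p, P_ p) /\ interval_set P_ )
  /\
  (* (ii) R'(p0) < 0 : opt-saturated, p* = p0, A(p0) = C, d p0 / d kpeak > 0 *)
  (forall p0 l, is_glb P_ p0 -> derivable_pt_lim R_ p0 l -> l < 0 ->
     (forall p, Eq_ p <-> p = p0) /\
     A_ p0 = C /\
     (exists g : R -> R, forall k, 0 < k ->
        is_glb (Pset n w Nhat sigma Phimax theta kavg k eta C) (g k)) /\
     (forall g : R -> R,
        (forall k, 0 < k -> is_glb (Pset n w Nhat sigma Phimax theta kavg k eta C) (g k)) ->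
        exists d, derivable_pt_lim g kpeak d /\ 0 < d))
  /\
  (* (iii) R'(p0) > 0 : opt-unsaturated, p* solves R'(p) = 0,
     d (p*(kavg) kavg) / d kavg > 0 *)
  (forall p0 l, is_glb P_ p0 -> derivable_pt_lim R_ p0 l -> 0 < l ->
     exists pstar,
       (forall p, Eq_ p <-> p = pstar) /\
       A_ pstar <> C /\
       derivable_pt_lim R_ pstar 0 /\
       (exists g : R -> R, forall k, 0 < k ->
          eta < g k /\
          derivable_pt_lim (Rev n w Nhat sigma Phimax theta k eta) (g k) 0) /\
       (forall g : R -> R,
          (forall k, 0 < k ->
             eta < g k /\
             derivable_pt_lim (Rev n w Nhat sigma Phimax theta k eta) (g k) 0) ->
          g kavg = pstar /\
          exists d, derivable_pt_lim (fun k => g k * k) kavg d /\ 0 < d)).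
Proof.
  cbv zeta. assert (Hk : 0 < kavg) by lra. assert (Hkp : 0 < kpeak) by lra.
  split; [|split].
  -
    split; [eapply (revenue_unimodal n w Nhat sigma Phimax theta eta); eassumption|].
    split; [eapply (Pset_nonempty n w Nhat sigma Phimax theta eta)|
            eapply (Pset_interval n w Nhat sigma Phimax theta eta)]; eassumption.
  -
    intros p0 l Hglb Hder Hl. split; [|split; [|split]].
    + eapply (saturated_equilibrium n w Nhat sigma Phimax theta eta); eassumption.
    + rewrite Apeak_closed by assumption.
      eapply (saturated_load n w Nhat sigma Phimax theta eta); eassumption.
    + eapply (threshold_exists n w Nhat sigma Phimax theta eta); eassumption.
    + eapply (threshold_increasing n w Nhat sigma Phimax theta eta); eassumption.
  -
    intros p0 l Hglb Hder Hl. exists (critical_price sigma Phimax theta eta kavg).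
    split; [|split; [|split; [|split]]].
    + eapply (unsaturated_equilibrium n w Nhat sigma Phimax theta eta); eassumption.
    + rewrite Apeak_closed by assumption. apply Rlt_not_eq.
      eapply (critical_load_below_capacity n w Nhat sigma Phimax theta eta); eassumption.
    + eapply (critical_price_is_critical n w Nhat sigma Phimax theta eta); eassumption.
    + exists (critical_price sigma Phimax theta eta).
      intros k Hk0. eapply (critical_price_is_critical n w Nhat sigma Phimax theta eta); eassumption.
    + intros g Hg. split.
      * destruct (Hg kavg Hk). eapply (critical_price_unique n w Nhat sigma Phimax theta eta); eassumption.
      * eapply (critical_revenue_increasing n w Nhat sigma Phimax theta eta); eassumption.
Qed.
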